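(* Let $K\ge2$ and $d\ge1$ be integers with $d=2$ or $K\le d+1$. Then no Softmax Code $\mathbf W\in\mathrm{OB}(d,K)$ has a rattler; i.e., for every Softmax Code $\mathbf W$ and every $k\in[K]$, $\operatorname{dist}(\mathbf w_k,\{\mathbf w_j\}_{j\ne k})=\min_{k'}\operatorname{dist}(\mathbf w_{k'},\{\mathbf w_j\}_{j\ne k'})$.
   Context: $\mathrm{OB}(d,K)$ is the set of real $d\times K$ matrices with unit-norm columns $\mathbf w_1,\dots,\mathbf w_K$. $\operatorname{dist}(\mathbf v,\mathcal W)=\inf\{\|\mathbf v-\mathbf w\|_2:\mathbf w\in\operatorname{conv}(\mathcal W)\}$; $\rho_{\text{one-vs-rest}}(\mathbf W)=\min_k\operatorname{dist}(\mathbf w_k,\{\mathbf w_j\}_{j\ne k})$. A Softmax Code is a maximizer of $\rho_{\text{one-vs-rest}}$ over $\mathrm{OB}(d,K)$. A rattler of $\mathbf W$ is an index $k$ with $\operatorname{dist}(\mathbf w_k,\{\mathbf w_j\}_{j\ne k})\ne\rho_{\text{one-vs-rest}}(\mathbf W)$. *)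

From HB Require Import structures.
From mathcomp Require Import all_boot all_order all_algebra.
From mathcomp Require Import classical_sets reals.
Set Implicit Arguments. Unset Strict Implicit. Unset Printing Implicit Defensive.
Import Order.TTheory GRing.Theory Num.Theory.
Local Open Scope ring_scope.
Local Open Scope classical_set_scope.

Definition enorm (R : realType) (d : nat) (v : 'cV[R]_d) : R :=
  Num.sqrt (\sum_(i < d) v i ord0 ^+ 2).

Definition wcol (R : realType) (d K : nat) (W : 'M[R]_(d, K)) (k : 'I_K) : 'cV[R]_d :=
  col k W.

Definition OB (R : realType) (d K : nat) (W : 'M[R]_(d, K)) : Prop :=
  forall k : 'I_K, enorm (wcol W k) = 1.

(* dist(w_k, {w_j}_{j<>k}) = inf over points of conv{w_j : j <> k} of ||w_k - w||. *)
Definition dist_rest (R : realType) (d K : nat) (W : 'M[R]_(d, K)) (k : 'I_K) : R :=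
  inf [set r : R | exists lam : 'I_K -> R,
         [/\ (forall j, 0 <= lam j), \sum_(j < K) lam j = 1, lam k = 0 &
             r = enorm (wcol W k - \sum_(j < K) lam j *: wcol W j)]].

Definition rho_ovr (R : realType) (d K : nat) (W : 'M[R]_(d, K)) : R :=
  inf [set dist_rest W k | k in [set: 'I_K]].

Definition softmax_code (R : realType) (d K : nat) (W : 'M[R]_(d, K)) : Prop :=
  OB W /\ forall W' : 'M[R]_(d, K), OB W' -> rho_ovr W' <= rho_ovr W.

Definition rattler (R : realType) (d K : nat) (W : 'M[R]_(d, K)) (k : 'I_K) : Prop :=
  dist_rest W k <> rho_ovr W.

From HB Require Import structures.
From mathcomp Require Import all_boot all_order all_algebra.
From mathcomp Require Import boolp classical_sets reals trigo.
From mathcomp Require Import ring lra.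
Import Order.TTheory GRing.Theory Num.Theory.
Set Implicit Arguments. Unset Strict Implicit. Unset Printing Implicit Defensive.
Local Open Scope ring_scope.

(* For [K <= d + 1] the optimal value of [rho_ovr] is [K / (K - 1)], attained by the
   regular simplex; for [d = 2] and [K >= 4] it is [1 - cos (2 pi / K)], attained by the
   regular [K]-gon (both lower bounds come from bounding the inner products of distinct
   columns).  In each case a code all of whose distances are at least the optimum [c]
   has all of them equal to [c]:
   - simplex: the distance of [w_k] to the centroid of the other columns bounds
     [dist_rest], and these squared distances sum to at most [K c^2];
   - polygon: sorting the columns by angle, each column lies on the arc between its two
     neighbours, which bounds its distance by [1 - cos (s / 2)] for an arc of length
     [s <= pi]; these arcs have total length [4 pi].
   A Softmax Code attains [c], so it has no rattler. *)

Section DotProduct.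
Variables (R : realType) (d : nat).
Implicit Types u v w : 'cV[R]_d.

Definition dotv u v : R := \sum_i u i ord0 * v i ord0.

Lemma dotvC u v : dotv u v = dotv v u.
Proof. by apply: eq_bigr => i _; rewrite mulrC. Qed.

Lemma dotvDr u v w : dotv u (v + w) = dotv u v + dotv u w.
Proof. by rewrite /dotv -big_split; apply: eq_bigr => i _; rewrite mxE mulrDr. Qed.

Lemma dotvBr u v w : dotv u (v - w) = dotv u v - dotv u w.
Proof. by rewrite /dotv -sumrB; apply: eq_bigr => i _; rewrite !mxE mulrBr. Qed.

Lemma dotvZr u v a : dotv u (a *: v) = a * dotv u v.
Proof. by rewrite /dotv mulr_sumr; apply: eq_bigr => i _; rewrite mxE mulrCA. Qed.

Lemma dotvDl u v w : dotv (v + w) u = dotv v u + dotv w u.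
Proof. by rewrite dotvC dotvDr !(dotvC u). Qed.

Lemma dotvBl u v w : dotv (v - w) u = dotv v u - dotv w u.
Proof. by rewrite dotvC dotvBr !(dotvC u). Qed.

Lemma dotvZl u v a : dotv (a *: v) u = a * dotv v u.
Proof. by rewrite dotvC dotvZr dotvC. Qed.

Lemma dotv_sumr I (r : seq I) (P : pred I) u (F : I -> 'cV[R]_d) :
  dotv u (\sum_(i <- r | P i) F i) = \sum_(i <- r | P i) dotv u (F i).
Proof.
elim/big_rec2: _ => [|i y1 y2 _ <-]; last by rewrite dotvDr.
by rewrite /dotv big1 // => i _; rewrite mxE mulr0.
Qed.

Lemma dotvv_ge0 u : 0 <= dotv u u.
Proof. by apply: sumr_ge0 => i _; rewrite -expr2 sqr_ge0. Qed.

Lemma enormE u : enorm u = Num.sqrt (dotv u u).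
Proof. by rewrite /enorm /dotv; under eq_bigr do rewrite expr2. Qed.

Lemma enorm_ge0 u : 0 <= enorm u.
Proof. by rewrite enormE sqrtr_ge0. Qed.

Lemma enorm_sqr u : enorm u ^+ 2 = dotv u u.
Proof. by rewrite enormE sqr_sqrtr // dotvv_ge0. Qed.

Lemma enormZ a u : enorm (a *: u) = `|a| * enorm u.
Proof. by rewrite !enormE dotvZl dotvZr mulrA -expr2 sqrtrM ?sqr_ge0 // sqrtr_sqr. Qed.

Lemma enorm0 : enorm (0 : 'cV[R]_d) = 0.
Proof. by rewrite enormE /dotv big1 ?sqrtr0 // => i _; rewrite mxE mul0r. Qed.

Lemma dotv_unit w : enorm w = 1 -> dotv w w = 1.
Proof. by move=> w1; rewrite -enorm_sqr w1 expr1n. Qed.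

(* Cauchy-Schwarz for a unit vector, from [0 <= |v - <w,v> w|^2]. *)
Lemma dotv_unit_le_enorm w v : enorm w = 1 -> dotv w v <= enorm v.
Proof.
move=> w1; set a := dotv w v.
have : 0 <= dotv (v - a *: w) (v - a *: w) by apply: dotvv_ge0.
rewrite dotvBl !dotvBr !dotvZl !dotvZr (dotv_unit w1) (dotvC v w) -/a -enorm_sqr.
have := enorm_ge0 v; case: (lerP a 0) => [|a_gt0] ? ?; first lra.
by rewrite -(ler_pXn2r (n := 2)) ?nnegrE ?(ltW a_gt0) //; nra.
Qed.

End DotProduct.

Section BoundedBelow.
Variables (R : realType) (I : finType).

Lemma lower_bound_tight (F : I -> R) c :
  (forall i, c <= F i) -> \sum_i F i <= #|I|%:R * c -> forall i, F i = c.
Proof.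
move=> Fc sumF i; apply/eqP; rewrite -subr_eq0; apply/eqP.
have sum0 : \sum_j (F j - c) = 0.
  apply/eqP; rewrite eq_le sumr_ge0 ?andbT => [|j _]; last by rewrite subr_ge0.
  by rewrite sumrB sumr_const subr_le0 -mulr_natl.
by apply: (psumr_eq0P _ sum0) => // j _; rewrite subr_ge0.
Qed.

End BoundedBelow.

Section DistRest.
Variables (R : realType) (d K : nat).
Hypothesis K_gt1 : (1 < K)%N.
Implicit Types (W : 'M[R]_(d, K)) (k : 'I_K) (lam : 'I_K -> R).

Definition convex_weights k lam :=
  [/\ forall j, 0 <= lam j, \sum_j lam j = 1 & lam k = 0].

Lemma dist_rest_le W k lam : convex_weights k lam ->
  dist_rest W k <= enorm (wcol W k - \sum_j lam j *: wcol W j).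
Proof.
move=> [lam_ge0 lam1 lamk]; apply: ge_inf; last by exists lam.
by exists 0 => _ [mu [_ _ _ ->]]; apply: enorm_ge0.
Qed.

Lemma exists_other k : exists j : 'I_K, j != k.
Proof.
have K_gt0 : (0 < K)%N by apply: ltn_trans K_gt1.
case: (eqVneq k (Ordinal K_gt1)) => [->|]; first by exists (Ordinal K_gt0).
by exists (Ordinal K_gt1); rewrite eq_sym.
Qed.

Lemma dist_rest_ge W k c :
  (forall lam, convex_weights k lam -> c <= enorm (wcol W k - \sum_j lam j *: wcol W j)) ->
  c <= dist_rest W k.
Proof.
move=> lb; apply: lb_le_inf; last by move=> _ [lam [? ? ? ->]]; apply: lb.
have [j jk] := exists_other k; pose lam i : R := (i == j)%:R.
exists (enorm (wcol W k - \sum_i lam i *: wcol W i)), lam; split => //.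
- by rewrite /lam (bigD1 j) //= eqxx big1 ?addr0 // => i /negbTE ->.
- by rewrite /lam eq_sym (negbTE jk).
Qed.

Lemma dist_rest_ge0 W k : 0 <= dist_rest W k.
Proof. by apply: dist_rest_ge => lam _; apply: enorm_ge0. Qed.

Lemma dist_rest_le_segment W k p q l : p != k -> q != k -> 0 <= l <= 1 ->
  dist_rest W k <= enorm (wcol W k - (l *: wcol W p + (1 - l) *: wcol W q)).
Proof.
move=> pk qk /andP[l_ge0 l_le1].
pose lam i := (if i == p then l else 0) + (if i == q then 1 - l else 0).
have -> : l *: wcol W p + (1 - l) *: wcol W q = \sum_j lam j *: wcol W j.
  rewrite /lam; under eq_bigr do rewrite scalerDl; rewrite big_split /=.
  by congr (_ + _); [rewrite (bigD1 p) | rewrite (bigD1 q)] => //=;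
    rewrite eqxx big1 ?addr0 // => j /negbTE ->; rewrite scale0r.
apply: dist_rest_le; split.
- by move=> j; apply: addr_ge0; case: ifP; lra.
- by rewrite big_split /= -!big_mkcond /= !big_pred1_eq; lra.
- by rewrite /lam eq_sym (negbTE pk) eq_sym (negbTE qk) addr0.
Qed.

Lemma dist_rest_le_col W k p : p != k -> dist_rest W k <= enorm (wcol W k - wcol W p).
Proof.
move=> pk; have l_bnd : 0 <= (1 : R) <= 1 by rewrite ler01 lexx.
by have := dist_rest_le_segment W pk pk l_bnd; rewrite subrr scale0r addr0 scale1r.
Qed.

(* Projecting onto [w_k]: [<w_k, w_k - x> = 1 - <w_k, x>] and [<w_k, x> <= g] on the hull. *)
Lemma dist_rest_ge_dot_bound W k g : OB W ->
  (forall j, j != k -> dotv (wcol W k) (wcol W j) <= g) -> 1 - g <= dist_rest W k.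
Proof.
move=> unitW dot_le; apply: dist_rest_ge => lam [lam_ge0 lam1 lamk].
apply: le_trans (dotv_unit_le_enorm _ (unitW k)).
rewrite dotvBr dotv_unit // dotv_sumr lerD2l lerN2.
rewrite -[g]mul1r -lam1 mulr_suml; apply: ler_sum => j _; rewrite dotvZr.
have [->|jk] := eqVneq j k; first by rewrite lamk !mul0r.
by rewrite ler_wpM2l ?dot_le.
Qed.

Lemma rho_ovr_le_dist W k : rho_ovr W <= dist_rest W k.
Proof.
apply: ge_inf; last by exists k.
by exists 0 => _ [i _ <-]; apply: dist_rest_ge0.
Qed.

Lemma rho_ovr_ge W c : (forall k, c <= dist_rest W k) -> c <= rho_ovr W.
Proof.
move=> c_le; apply: lb_le_inf; last by move=> _ [i _ <-].
have K_gt0 : (0 < K)%N by apply: ltn_trans K_gt1.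
by exists (dist_rest W (Ordinal K_gt0)), (Ordinal K_gt0).
Qed.

(* The hypotheses make [c] the optimal value of [rho_ovr]. *)
Lemma no_rattler_of_tight_bound W c : softmax_code W ->
  (exists W', OB W' /\ forall k, c <= dist_rest W' k) ->
  (forall W, OB W -> (forall k, c <= dist_rest W k) -> forall k, dist_rest W k <= c) ->
  forall k, ~ rattler W k.
Proof.
move=> [unitW W_max] [W' [unitW' W'_ge]] tight k; apply; apply/eqP.
have c_le_rho : c <= rho_ovr W by apply: le_trans (W_max _ unitW'); apply: rho_ovr_ge.
have W_ge k' : c <= dist_rest W k' by apply: le_trans c_le_rho (rho_ovr_le_dist _ _).
by rewrite eq_le (le_trans (tight _ unitW W_ge k)) ?rho_ovr_le_dist.
Qed.

End DistRest.

Section SimplexTight.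
Variables (R : realType) (d K : nat).
Hypothesis K_gt1 : (1 < K)%N.
Implicit Types (W : 'M[R]_(d, K)) (k : 'I_K).

Definition centroid_rest W k : 'cV[R]_d := K.-1%:R^-1 *: \sum_(j | j != k) wcol W j.

Lemma K_pred_gt0 : 0 < K.-1%:R :> R.
Proof. by rewrite ltr0n -ltnS prednK // ltnW. Qed.

Lemma natr_prednK : K%:R = K.-1%:R + 1 :> R.
Proof. by rewrite natr1 prednK // ltnW. Qed.

Lemma dist_rest_le_centroid W k : dist_rest W k <= enorm (wcol W k - centroid_rest W k).
Proof.
pose lam j : R := if j == k then 0 else K.-1%:R^-1.
have -> : centroid_rest W k = \sum_j lam j *: wcol W j.
  rewrite /centroid_rest scaler_sumr [RHS](bigD1 k) //= /lam eqxx scale0r add0r.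
  by apply: eq_bigr => j /negbTE ->.
apply: dist_rest_le => //; split.
- by move=> j; rewrite /lam; case: ifP; rewrite ?invr_ge0 ?ler0n.
- rewrite (bigD1 k) //= /lam eqxx add0r (eq_bigr (fun _ => K.-1%:R^-1)).
    by rewrite sumr_const cardC1 card_ord -(mulr_natr K.-1%:R^-1) mulVf ?gt_eqF ?K_pred_gt0.
  by move=> j /negbTE ->.
- by rewrite /lam eqxx.
Qed.

Lemma centroid_restE W k :
  wcol W k - centroid_rest W k = (1 + K.-1%:R^-1) *: wcol W k - K.-1%:R^-1 *: \sum_j wcol W j.
Proof.
rewrite /centroid_rest (bigD1 k (P := predT)) //= scalerDr scalerDl scale1r.
by rewrite opprD addrA addrK.
Qed.

(* With [n = K - 1], the sum equals [K (K/n)^2 - (K/n^2) |sum_j w_j|^2]. *)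
Lemma sum_centroid_gap_le W : OB W ->
  \sum_k enorm (wcol W k - centroid_rest W k) ^+ 2 <= K%:R * (K%:R / K.-1%:R) ^+ 2.
Proof.
move=> unitW; set n : R := K.-1%:R; set S := \sum_j wcol W j.
have n_gt0 : 0 < n := K_pred_gt0.
have gapE k : enorm (wcol W k - centroid_rest W k) ^+ 2 =
    (1 + n^-1) ^+ 2 - 2 * (1 + n^-1) * n^-1 * dotv (wcol W k) S + n^-2 * dotv S S.
  rewrite centroid_restE enorm_sqr !dotvBl !dotvBr !dotvZl !dotvZr dotv_unit // (dotvC S).
  by field; rewrite gt_eqF.
have sum_dot : \sum_k dotv (wcol W k) S = dotv S S.
  by rewrite /S dotv_sumr; apply: eq_bigr => k _; rewrite dotvC.
rewrite (eq_bigr _ (fun k _ => gapE k)) big_split sumrB /= !sumr_const -mulr_sumr sum_dot.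
have mulrnK y : y *+ K = (n + 1) * y by rewrite -mulr_natl natr_prednK.
rewrite card_ord !mulrnK -subr_ge0.
set x := dotv S S; have x_ge0 : 0 <= x := dotvv_ge0 S.
rewrite [X in 0 <= X](_ : _ = (n + 1) / n ^+ 2 * x); last by field; rewrite gt_eqF.
by rewrite mulr_ge0 // divr_ge0 ?exprn_ge0 ?addr_ge0 // ltW.
Qed.

Lemma simplex_bound_tight W : OB W ->
  (forall k, K%:R / K.-1%:R <= dist_rest W k) -> forall k, dist_rest W k <= K%:R / K.-1%:R.
Proof.
move=> unitW dist_ge.
have c_ge0 : 0 <= K%:R / K.-1%:R :> R by rewrite divr_ge0 ?ler0n.
have gap_ge k : (K%:R / K.-1%:R) ^+ 2 <= enorm (wcol W k - centroid_rest W k) ^+ 2.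
  rewrite ler_pXn2r ?nnegrE ?enorm_ge0 //.
  exact: le_trans (dist_ge k) (dist_rest_le_centroid W k).
have gapE := lower_bound_tight gap_ge; rewrite card_ord in gapE.
move=> k; apply: le_trans (dist_rest_le_centroid W k) _.
rewrite -(ler_pXn2r (n := 2)) ?nnegrE ?enorm_ge0 //.
by rewrite (gapE (sum_centroid_gap_le unitW)).
Qed.

End SimplexTight.

Section RegularSimplex.
Variables (R : realType) (d n : nat).
Hypotheses (n_gt0 : (0 < n)%N) (n_le_d : (n <= d)%N).

Definition basis_col (m : nat) : 'cV[R]_d := \col_i ((i : nat) == m)%:R.
Definition prefix_ones : 'cV[R]_d := \col_i ((i : nat) < n)%:R.

Lemma dotv_basis_col m (m_lt_d : (m < d)%N) (v : 'cV[R]_d) :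
  dotv (basis_col m) v = v (Ordinal m_lt_d) ord0.
Proof.
rewrite /dotv (bigD1 (Ordinal m_lt_d)) //= mxE eqxx mul1r big1 ?addr0 // => i ne_im.
rewrite mxE; case: eqP => [im|]; last by rewrite mul0r.
by case/eqP: ne_im; apply: val_inj.
Qed.

Lemma dotv_prefix_ones : dotv prefix_ones prefix_ones = n%:R.
Proof.
rewrite /dotv (eq_bigr (fun i : 'I_d => if (i < n)%N then 1 else 0)).
  by rewrite -big_mkcond (big_ord_narrow n_le_d) sumr_const card_ord.
by move=> i _; rewrite mxE; case: ifP; rewrite ?mulr1 ?mul0r.
Qed.

Definition simplex_coeff_spec (a b g : R) : Prop := let nR := n%:R in
  [/\ a ^+ 2 + (2 * a * b + nR * b ^+ 2) = 1, 2 * a * b + nR * b ^+ 2 = - nR^-1,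
      g * (a + nR * b) = nR^-1 & nR * g ^+ 2 = 1].

(* The numeric choice behind the regular simplex: [g = 1/sqrt n], [a = sqrt (n+1) g],
   [b = (g - a)/n], so that [a + n b = g] and [b (2a + n b) = (g^2 - a^2)/n = -1/n]. *)
Lemma simplex_coefficients : exists a b g : R, simplex_coeff_spec a b g.
Proof.
set nR : R := n%:R; have nR_gt0 : 0 < nR by rewrite ltr0n.
set g := (Num.sqrt nR)^-1; set a := Num.sqrt (nR + 1) * g.
have g2 : g ^+ 2 = nR^-1 by rewrite exprVn sqr_sqrtr // ltW.
have a2 : a ^+ 2 = (nR + 1) / nR by rewrite exprMn g2 sqr_sqrtr //; lra.
have cross : 2 * a * ((g - a) / nR) + nR * ((g - a) / nR) ^+ 2 = - nR^-1.
  have -> : 2 * a * ((g - a) / nR) + nR * ((g - a) / nR) ^+ 2 = (g ^+ 2 - a ^+ 2) / nR.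
    by field; rewrite gt_eqF.
  by rewrite g2 a2; field; rewrite gt_eqF.
exists a, ((g - a) / nR), g; split => //.
- by rewrite cross a2; field; rewrite gt_eqF.
- by rewrite (_ : a + _ = g) ?g2 //; field; rewrite gt_eqF.
- by rewrite g2 mulfV // gt_eqF.
Qed.

Definition simplex_mx (a b g : R) : 'M[R]_(d, n.+1) :=
  \matrix_(i, j) if (j < n)%N then a * ((i : nat) == j)%:R + b * ((i : nat) < n)%:R
                  else - g * ((i : nat) < n)%:R.

Lemma col_simplex_mx a b g (j : 'I_n.+1) : wcol (simplex_mx a b g) j =
  if (j < n)%N then a *: basis_col j + b *: prefix_ones else - g *: prefix_ones.
Proof. by apply/matrixP => i l; rewrite !mxE; case: ifP; rewrite !mxE. Qed.

Lemma dotv_front_ones (a b : R) m : (m < n)%N ->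
  dotv (a *: basis_col m + b *: prefix_ones) prefix_ones = a + n%:R * b.
Proof.
move=> m_lt_n; have m_lt_d := leq_trans m_lt_n n_le_d.
by rewrite dotvDl !dotvZl dotv_basis_col mxE m_lt_n dotv_prefix_ones mulr1 mulrC.
Qed.

Lemma dotv_front (a b : R) m m' : (m < n)%N -> (m' < n)%N ->
  dotv (a *: basis_col m + b *: prefix_ones) (a *: basis_col m' + b *: prefix_ones) =
  a ^+ 2 * (m' == m)%:R + (2 * a * b + n%:R * b ^+ 2).
Proof.
move=> m_lt_n m'_lt_n; have m'_lt_d := leq_trans m'_lt_n n_le_d.
rewrite dotvDr !dotvZr dotv_front_ones // dotvC dotv_basis_col !mxE m'_lt_n /=; ring.
Qed.

Lemma ge_ord_max (j : 'I_n.+1) : (n <= j)%N -> j = ord_max.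
Proof. by move=> n_le_j; apply/val_inj/eqP; rewrite eqn_leq n_le_j -ltnS ltn_ord. Qed.

Lemma simplex_mx_gram (a b g : R) : simplex_coeff_spec a b g ->
  forall j j' : 'I_n.+1, dotv (wcol (simplex_mx a b g) j) (wcol (simplex_mx a b g) j') =
    if j == j' then 1 else - n%:R^-1.
Proof.
move=> [diag off cross last] j j'; rewrite !col_simplex_mx.
have [j_lt|/ge_ord_max->] := ltnP j n; have [j'_lt|/ge_ord_max->] := ltnP j' n.
- rewrite dotv_front // eq_sym; case: eqP => [/val_inj->|j_ne]; first by rewrite eqxx mulr1.
  by rewrite ifN ?mulr0 ?add0r //; apply/eqP => jj; apply: j_ne; rewrite jj.
- rewrite dotvZr dotv_front_ones // ifN; first by rewrite mulNr cross.
  by apply/eqP => /(congr1 val) /= jn; rewrite jn ltnn in j_lt.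
- rewrite dotvZl dotvC dotv_front_ones // ifN; first by rewrite mulNr cross.
  by apply/eqP => /(congr1 val) /= jn; rewrite -jn ltnn in j'_lt.
- by rewrite eqxx dotvZl dotvZr dotv_prefix_ones mulrA mulrNN -expr2 mulrC last.
Qed.

End RegularSimplex.

Lemma simplex_code_exists (R : realType) (d K : nat) : (1 < K)%N -> (K <= d.+1)%N ->
  exists W : 'M[R]_(d, K), OB W /\ forall k, K%:R / K.-1%:R <= dist_rest W k.
Proof.
case: K => // n n_gt0 n_le_d; have [a [b [g params]]] := simplex_coefficients R n_gt0.
have gram := @simplex_mx_gram R d n n_le_d a b g params.
have unitW : OB (simplex_mx d n a b g) by move=> k; rewrite enormE gram eqxx sqrtr1.
exists (simplex_mx d n a b g); split => // k /=.
have -> : n.+1%:R / n%:R = 1 - (- n%:R^-1) :> R.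
  by rewrite -natr1 opprK; field; rewrite pnatr_eq0 -lt0n.
by apply: dist_rest_ge_dot_bound => // j j_ne; rewrite gram eq_sym (negbTE j_ne).
Qed.

Section UnitCircle.
Variable R : realType.
Implicit Types s t a b : R.

Lemma ler_cos : {in `[0, pi] &, {mono (@cos R) : x y /~ y <= x}}.
Proof.
by move=> x y xI yI; rewrite !le_eqVlt ltr_cos // (inj_in_eq (@cos_inj R)) // eq_sym.
Qed.

Definition unit_col t : 'cV[R]_2 := \col_i (if (i : nat) == 0%N then cos t else sin t).

Lemma dotv2 (u v : 'cV[R]_2) :
  dotv u v = u ord0 ord0 * v ord0 ord0 + u ord_max ord0 * v ord_max ord0.
Proof.
by rewrite /dotv big_ord_recl big_ord1 (_ : lift ord0 ord0 = ord_max) //; apply: val_inj.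
Qed.

Lemma dotv_unit_col s t : dotv (unit_col s) (unit_col t) = cos (s - t).
Proof. by rewrite dotv2 !mxE /= cosB. Qed.

Lemma enorm_unit_col t : enorm (unit_col t) = 1.
Proof. by rewrite enormE dotv_unit_col subrr cos0 sqrtr1. Qed.

Lemma polar_angle (v : 'cV[R]_2) : enorm v = 1 ->
  exists t, [/\ 0 <= t, t < pi *+ 2 & v = unit_col t].
Proof.
move=> /dotv_unit; rewrite dotv2; set x := v ord0 ord0; set y := v ord_max ord0 => xy1.
have vE t : cos t = x -> sin t = y -> v = unit_col t.
  move=> cx sy; apply/matrixP => i j; rewrite !mxE (ord1 j).
  by case: i => [[|[|//]] ?] /=; rewrite ?cx ?sy; congr (v _ _); apply: val_inj.
have pi_gt0 := @pi_gt0 R.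
have x_bnd : -1 <= x <= 1 by apply/andP; split; nra.
have sin_acos_x : sin (acos x) = `|y|.
  by rewrite sin_acos // (_ : 1 - x ^+ 2 = y ^+ 2) ?sqrtr_sqr //; lra.
have acos_ge0 := acos_ge0 x_bnd; have acos_le := acos_lepi x_bnd.
have cos_acos : cos (acos x) = x by rewrite acosK // in_itv.
have [y_ge0|y_lt0] := lerP 0 y.
  exists (acos x); split => //; first by rewrite mulr2n; lra.
  by apply: vE; rewrite // sin_acos_x ger0_norm.
exists (pi *+ 2 - acos x); split.
- by rewrite mulr2n; lra.
- suff : 0 < acos x by lra.
  by rewrite acos_gt0 //; case/andP: x_bnd => -> _ /=; nra.
- by apply: vE; rewrite ?cosB ?sinB cos2pi sin2pi ?cos_acos ?sin_acos_x ?(ltr0_norm y_lt0); ring.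
Qed.

Lemma unit_col_chord a b t :
  sin b *: unit_col (t - a) + sin a *: unit_col (t + b) = sin (a + b) *: unit_col t.
Proof.
apply/matrixP => i j; rewrite !mxE; case: ifP => _.
- by rewrite cosB cosD sinD; ring.
- by rewrite sinB !sinD; ring.
Qed.

(* With [h = (a + b)/2] and [e = (a - b)/2]: [sin a + sin b = 2 sin h cos e],
   [sin (a + b) = 2 sin h cos h] and [0 <= cos h <= cos e <= 1]. *)
Lemma sin_chord_bounds a b : 0 < a -> 0 < b -> a + b <= pi ->
  [/\ 0 < sin a + sin b, cos ((a + b) / 2) * (sin a + sin b) <= sin (a + b)
    & sin (a + b) <= sin a + sin b].
Proof.
move=> a_gt0 b_gt0 ab_le; have pi_gt0 := @pi_gt0 R.
have sa : 0 < sin a by apply: sin_gt0_pi; lra.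
have sb : 0 < sin b by apply: sin_gt0_pi; lra.
set h := (a + b) / 2; set e := (a - b) / 2.
have [aE bE] : a = h + e /\ b = h - e by split; rewrite /h /e; field.
have sumE : sin a + sin b = 2 * sin h * cos e by rewrite aE bE sinD sinB; ring.
have sinE : sin (a + b) = 2 * sin h * cos h.
  by rewrite aE bE addrACA subrr addr0 sinD; ring.
have sh : 0 < sin h by apply: sin_gt0_pi; rewrite /h; lra.
have ch : 0 <= cos h by apply: cos_ge0_pihalf; rewrite /h; apply/andP; split; lra.
have ce : cos h <= cos e.
  rewrite -(cos_norm e) ler_cos ?in_itv /= ?normr_ge0; rewrite /h /e ?ler_norml;
    try (apply/andP; split); lra.
have ce1 : cos e <= 1 := cos_le1 e.
have sh_ch : 0 <= 2 * sin h * cos h by rewrite mulr_ge0 // mulr_ge0 // ltW.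
split; first lra; rewrite sumE sinE.
- by have := ler_wpM2l sh_ch ce1; rewrite mulr1; lra.
- by rewrite ler_wpM2l // mulr_ge0 // ltW.
Qed.

Lemma dist_rest_le_arc K (W : 'M[R]_(2, K)) p k q t a b :
  p != k -> q != k -> 0 < a -> 0 < b -> a + b <= pi ->
  wcol W p = unit_col (t - a) -> wcol W k = unit_col t -> wcol W q = unit_col (t + b) ->
  dist_rest W k <= 1 - cos ((a + b) / 2).
Proof.
move=> pk qk a_gt0 b_gt0 ab_le Wp Wk Wq.
have [S_gt0 lb ub] := sin_chord_bounds a_gt0 b_gt0 ab_le; set S := sin a + sin b in S_gt0 lb ub.
set x := sin (a + b) / S.
have pi_gt0 := @pi_gt0 R.
have [sa sb] : 0 < sin a /\ 0 < sin b by split; apply: sin_gt0_pi; lra.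
have l_bnd : 0 <= sin b / S <= 1.
  by rewrite divr_ge0 ?ler_pdivrMr ?mul1r /S ?ltW //; lra.
have := dist_rest_le_segment W pk qk l_bnd; rewrite Wp Wk Wq.
have -> : 1 - sin b / S = sin a / S by rewrite /S; field; rewrite gt_eqF.
have -> : sin b / S *: unit_col (t - a) + sin a / S *: unit_col (t + b) = x *: unit_col t.
  by rewrite /x !(mulrC _ S^-1) -!scalerA -scalerDr unit_col_chord scalerA.
rewrite -{1}[unit_col t]scale1r -scalerBl.
rewrite enormZ enorm_unit_col mulr1 => /le_trans; apply.
have x_bnd : cos ((a + b) / 2) <= x <= 1 by rewrite ler_pdivlMr ?ler_pdivrMr ?mul1r ?lb.
by rewrite ger0_norm; lra.
Qed.

End UnitCircle.

Section RegularPolygon.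
Variables (R : realType) (K : nat).
Hypothesis K_gt1 : (1 < K)%N.

Definition polygon_angle (m : nat) : R := pi *+ 2 * m%:R / K%:R.

Definition polygon_mx : 'M[R]_(2, K) := \matrix_(i, j) unit_col (polygon_angle j) i ord0.

Lemma col_polygon_mx j : wcol polygon_mx j = unit_col (polygon_angle j).
Proof. by apply/matrixP => i l; rewrite (ord1 l) !mxE. Qed.

Lemma K_gt0R : 0 < K%:R :> R.
Proof. by rewrite ltr0n (ltnW K_gt1). Qed.

Lemma polygon_angleB m l : (l <= m)%N ->
  polygon_angle m - polygon_angle l = polygon_angle (m - l).
Proof. by move=> l_le; rewrite /polygon_angle (natrB _ l_le) -mulrBl -mulrBr. Qed.

Lemma polygon_angleK : polygon_angle K = pi *+ 2.
Proof. by rewrite /polygon_angle mulfK // gt_eqF ?K_gt0R. Qed.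

Lemma ler_polygon_angle m l : (m <= l)%N -> polygon_angle m <= polygon_angle l.
Proof.
move=> m_le; rewrite /polygon_angle ler_pM2r ?invr_gt0 ?K_gt0R // ler_pM2l ?ler_nat //.
by rewrite mulrn_wgt0 // pi_gt0.
Qed.

Lemma polygon_angle_step_le_pi : polygon_angle 1 <= pi.
Proof.
have := @pi_gt0 R; have : 2%:R <= K%:R :> R by rewrite ler_nat.
by rewrite /polygon_angle mulr1 ler_pdivrMr ?K_gt0R // mulr2n; nra.
Qed.

(* [m] and [K - m] steps are symmetric about [pi], and one of them is at most [pi]. *)
Lemma cos_polygon_angle_le m : (0 < m < K)%N -> cos (polygon_angle m) <= cos (polygon_angle 1).
Proof.
have step_ge0 : 0 <= polygon_angle 1.
  by have := ler_polygon_angle (leq0n 1); rewrite /polygon_angle mulr0 mul0r.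
have le_step l : (0 < l)%N -> polygon_angle l <= pi ->
    cos (polygon_angle l) <= cos (polygon_angle 1).
  move=> l_gt0 l_le; have step_le := ler_polygon_angle l_gt0.
  by rewrite ler_cos ?in_itv /= ?step_ge0 ?polygon_angle_step_le_pi ?(le_trans step_ge0).
move=> /andP[m_gt0 m_lt].
have symm : polygon_angle (K - m) = pi *+ 2 - polygon_angle m.
  by rewrite -polygon_angleB ?polygon_angleK // ltnW.
have [|m_gt] := lerP (polygon_angle m) pi; first exact: le_step.
have -> : cos (polygon_angle m) = cos (polygon_angle (K - m)).
  by rewrite symm cosB cos2pi sin2pi mul1r mul0r addr0.
by apply: le_step; rewrite ?subn_gt0 // symm mulr2n; lra.
Qed.

Lemma polygon_code_exists : exists W : 'M[R]_(2, K),
  OB W /\ forall k, 1 - cos (pi *+ 2 / K%:R) <= dist_rest W k.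
Proof.
rewrite -[pi *+ 2]mulr1 -/(polygon_angle 1).
have unitW : OB polygon_mx by move=> k; rewrite col_polygon_mx enorm_unit_col.
exists polygon_mx; split => // k; apply: dist_rest_ge_dot_bound => // j j_ne.
rewrite !col_polygon_mx dotv_unit_col.
have [j_lt|k_lt|/val_inj jk] := ltngtP j k; last by rewrite jk eqxx in j_ne.
- rewrite (polygon_angleB (ltnW j_lt)); apply: cos_polygon_angle_le.
  by rewrite subn_gt0 j_lt (leq_ltn_trans (leq_subr _ _)).
- rewrite -cosN opprB (polygon_angleB (ltnW k_lt)); apply: cos_polygon_angle_le.
  by rewrite subn_gt0 k_lt (leq_ltn_trans (leq_subr _ _)).
Qed.

End RegularPolygon.

Lemma increasing_reindex (R : realType) (K : nat) (th : 'I_K -> R) : injective th ->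
  exists sg : 'I_K -> 'I_K,
    (forall i j : 'I_K, (i < j)%N -> th (sg i) < th (sg j)) /\ forall k, exists i, sg i = k.
Proof.
move=> th_inj; set s := sort (fun i j => th i <= th j) (enum 'I_K).
have s_size : size s = K by rewrite size_sort size_enum_ord.
have s_perm : perm_eq s (enum 'I_K) by rewrite perm_sort.
have s_uniq : uniq s by rewrite (perm_uniq s_perm) enum_uniq.
have s_sorted : sorted (fun i j => th i <= th j) s.
  by apply: sort_sorted => i j; apply: le_total.
exists (fun i => nth i s i); split => [i j ij|k].
  have le_ij : th (nth i s i) <= th (nth i s j).
    have le_tr : transitive (fun i j : 'I_K => th i <= th j) by move=> ? ? ?; apply: le_trans.
    by apply: (sorted_leq_nth le_tr _ i s_sorted); rewrite ?inE ?s_size ?(ltnW ij).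
  rewrite (set_nth_default i) ?s_size // lt_neqAle le_ij andbT.
  apply/negP => /eqP /th_inj /eqP; rewrite nth_uniq ?s_size // => /eqP /val_inj ij_eq.
  by rewrite ij_eq ltnn in ij.
have k_in : k \in s by rewrite (perm_mem s_perm) mem_enum.
have k_idx : (index k s < K)%N by rewrite -[X in (_ < X)%N]s_size index_mem.
by exists (Ordinal k_idx); rewrite nth_index.
Qed.

Section CircularOrder.
Variables (R : realType) (K : nat) (phi : 'I_K -> R).
Hypotheses (K_gt1 : (1 < K)%N) (phi_ge0 : forall i, 0 <= phi i)
  (phi_lt : forall i, phi i < pi *+ 2) (phi_incr : forall i j : 'I_K, (i < j)%N -> phi i < phi j).

Let K_gt0 : (0 < K)%N := ltnW K_gt1.

Definition cyc (m : nat) : 'I_K := Ordinal (ltn_pmod m K_gt0).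

(* The periodic lift of the sorted angles: an increasing sequence of reals. *)
Definition lift_angle (m : nat) : R := phi (cyc m) + pi *+ 2 *+ (m %/ K).

Lemma lift_angle_ltS m : lift_angle m < lift_angle m.+1.
Proof.
rewrite /lift_angle (divnS m K_gt0); case: (boolP (K %| m.+1)%N) => [dvd|ndvd].
  rewrite add1n (mulrS (pi *+ 2)) addrA ltrD2r.
  by have := phi_lt (cyc m); have := phi_ge0 (cyc m.+1); lra.
by rewrite add0n ltrD2r phi_incr //= modnS (negbTE ndvd).
Qed.

Lemma lift_angle_addK m : lift_angle (m + K) = lift_angle m + pi *+ 2.
Proof.
rewrite /lift_angle (_ : cyc (m + K) = cyc m); last by apply: val_inj; rewrite /= modnDr.
by rewrite divnDr ?dvdnn // divnn K_gt0 addn1 mulrSr addrA.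
Qed.

Lemma unit_col_lift_angle m : unit_col (lift_angle m) = unit_col (phi (cyc m)).
Proof.
by apply/matrixP => i j; rewrite !mxE /lift_angle (periodicn (@cosD2pi R)) (periodicn (@sinD2pi R)).
Qed.

Lemma cyc_addK (i : 'I_K) : cyc (K + i)%N = i.
Proof. by apply: val_inj; rewrite /= modnDl modn_small. Qed.

Lemma cyc_neqS m : cyc m != cyc m.+1.
Proof.
apply/negP => /eqP /(congr1 val) /= eq_mod.
have : (m + 0 == m + 1 %[mod K])%N by rewrite addn0 addn1 eq_mod.
by rewrite eqn_modDl mod0n modn_small.
Qed.

(* The arc from the predecessor to the successor of the [i]-th sorted angle. *)
Definition double_gap (i : 'I_K) : R := lift_angle (K.-1 + i)%N.+2 - lift_angle (K.-1 + i)%N.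

Lemma double_gap_gt0 i : 0 < double_gap i.
Proof.
rewrite subr_gt0; apply: lt_trans (lift_angle_ltS _) _; exact: lift_angle_ltS.
Qed.

Lemma sum_double_gap : \sum_i double_gap i = pi *+ 4.
Proof.
have K_pred : K.-1.+1 = K by rewrite prednK.
have telescope b : \sum_(i < K) (lift_angle (b + i)%N.+1 - lift_angle (b + i)%N) = pi *+ 2.
  rewrite -(big_mkord xpredT (fun i => lift_angle (b + i)%N.+1 - lift_angle (b + i)%N)).
  rewrite (telescope_sumr_eq (fun i => lift_angle (b + i)%N)) //; last by move=> k _; rewrite addnS.
  by rewrite addn0 lift_angle_addK addrAC subrr add0r.
rewrite (eq_bigr (fun i : 'I_K => (lift_angle (K.-1 + i)%N.+1 - lift_angle (K.-1 + i)%N) +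
    (lift_angle (K + i)%N.+1 - lift_angle (K + i)%N))); last first.
  by move=> i _; rewrite /double_gap -addSn K_pred; ring.
by rewrite big_split /= !telescope -mulrnDr.
Qed.

Variables (W : 'M[R]_(2, K)) (sg : 'I_K -> 'I_K).
Hypotheses (sg_inj : injective sg) (W_sg : forall i, wcol W (sg i) = unit_col (phi i)).

Lemma col_lift_angle m : wcol W (sg (cyc m)) = unit_col (lift_angle m).
Proof. by rewrite W_sg unit_col_lift_angle. Qed.

Lemma dist_rest_le_double_gap i :
  double_gap i <= pi -> dist_rest W (sg i) <= 1 - cos (double_gap i / 2).
Proof.
set b := (K.-1 + i)%N; have mid : cyc b.+1 = i by rewrite /b -addSn prednK // cyc_addK.
set a := lift_angle b.+1 - lift_angle b; set e := lift_angle b.+2 - lift_angle b.+1.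
have -> : double_gap i = a + e by rewrite /double_gap -/b /a /e; ring.
move=> ae_le; rewrite -mid.
apply: (dist_rest_le_arc (p := sg (cyc b)) (q := sg (cyc b.+2)) (t := lift_angle b.+1)).
- by rewrite (inj_eq sg_inj) cyc_neqS.
- by rewrite (inj_eq sg_inj) eq_sym cyc_neqS.
- by rewrite subr_gt0 lift_angle_ltS.
- by rewrite subr_gt0 lift_angle_ltS.
- exact: ae_le.
- by rewrite col_lift_angle /a opprB addrC subrK.
- exact: col_lift_angle.
- by rewrite col_lift_angle /e addrC subrK.
Qed.

(* Each double gap is at least [4 pi / K] and the double gaps sum to [4 pi]. *)
Lemma polygon_bound_tight_sorted : (3 < K)%N ->
  (forall k, 1 - cos (pi *+ 2 / K%:R) <= dist_rest W k) ->
  forall i, dist_rest W (sg i) <= 1 - cos (pi *+ 2 / K%:R).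
Proof.
move=> K_gt3 dist_ge; set u := pi *+ 2 / K%:R.
have pi_gt0 := @pi_gt0 R; have K_gt0R : 0 < K%:R :> R by rewrite ltr0n.
have u_gt0 : 0 < u by rewrite divr_gt0 // mulrn_wgt0.
have u2_le : u *+ 2 <= pi.
  have : 4%:R <= K%:R :> R by rewrite ler_nat.
  by rewrite /u mulr2n -mulrDl ler_pdivrMr // !mulr2n => ?; nra.
have gap_ge i : u *+ 2 <= double_gap i.
  have [gap_le|] := lerP (double_gap i) pi; last by lra.
  have := le_trans (dist_ge _) (dist_rest_le_double_gap gap_le).
  rewrite lerD2l lerN2 ler_cos ?in_itv /= -/u; first by rewrite (mulr2n u); lra.
  - by rewrite (ltW u_gt0) /=; lra.
  - by have := double_gap_gt0 i => ?; apply/andP; split; lra.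
have sum_le : \sum_i double_gap i <= #|'I_K|%:R * (u *+ 2).
  by rewrite sum_double_gap card_ord /u -mulrnAl mulrC mulfVK ?gt_eqF //; lra.
have gapE := lower_bound_tight gap_ge sum_le.
move=> i; apply: le_trans (dist_rest_le_double_gap _) _; rewrite gapE //.
by rewrite (mulr2n u) (_ : (u + u) / 2 = u) //; field.
Qed.

End CircularOrder.

Lemma polygon_bound_tight (R : realType) (K : nat) : (3 < K)%N -> forall W : 'M[R]_(2, K), OB W ->
  (forall k, 1 - cos (pi *+ 2 / K%:R) <= dist_rest W k) ->
  forall k, dist_rest W k <= 1 - cos (pi *+ 2 / K%:R).
Proof.
move=> K_gt3 W unitW dist_ge; have K_gt1 : (1 < K)%N by apply: ltn_trans K_gt3.
have c_gt0 : 0 < 1 - cos (pi *+ 2 / K%:R) :> R.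
  have pi_gt0 := @pi_gt0 R; have K_gt0 : 0 < K%:R :> R by rewrite ltr0n ltnW.
  have K_ge4 : 4%:R <= K%:R :> R by rewrite ler_nat.
  have u_gt0 : 0 < pi *+ 2 / K%:R :> R by rewrite divr_gt0 // mulrn_wgt0.
  have u_le : pi *+ 2 / K%:R <= pi :> R by rewrite ler_pdivrMr // mulr2n; nra.
  by rewrite subr_gt0 -[X in _ < X]cos0 ltr_cos // !in_itv /=
    ?lexx ?(ltW u_gt0) ?u_le ?(ltW pi_gt0).
have [th th_spec] := choice (fun k => polar_angle (unitW k)).
have th_ge0 k : 0 <= th k by have [] := th_spec k.
have th_lt k : th k < pi *+ 2 by have [] := th_spec k.
have col_th k : wcol W k = unit_col (th k) by have [] := th_spec k.
have th_inj : injective th.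
  move=> j k th_jk; apply/eqP/negPn/negP => j_ne.
  have := dist_rest_le_col W j_ne; rewrite !col_th th_jk subrr enorm0.
  by move=> /(le_trans (dist_ge k)); lra.
have [sg [sg_incr sg_surj]] := increasing_reindex th_inj.
have sg_inj : injective sg.
  move=> i j sg_ij; apply: val_inj.
  by case: (ltngtP i j) => // /sg_incr; rewrite sg_ij ltxx.
move=> k; have [i <-] := sg_surj k.
by apply: (polygon_bound_tight_sorted (phi := th \o sg)) => // j; [apply: th_ge0 | apply: th_lt].
Qed.

Theorem mainTheorem7 (R : realType) (d K : nat)
  (hK : (2 <= K)%N) (hd : (1 <= d)%N) (hdK : (d == 2)%N || (K <= d.+1)%N)
  (W : 'M[R]_(d, K)) (hW : softmax_code W) :
  forall k : 'I_K, ~ rattler W k.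
Proof.
have [K_le|K_gt] := leqP K d.+1.
  exact: (no_rattler_of_tight_bound hK hW (simplex_code_exists R hK K_le) (simplex_bound_tight hK)).
move: hdK; rewrite leqNgt K_gt orbF => /eqP d2; subst d.
exact: (no_rattler_of_tight_bound hK hW (polygon_code_exists R hK) (polygon_bound_tight K_gt)).
Qed.
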